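(* A quasi-order is unary FA-presentable if and only if it is isomorphic to one obtained by propagating a unary FA-foundational quasi-order $(Q,\le)$ in which every seed $P_k=\{p^{(k)}_1,\dots,p^{(k)}_5\}$ is either an anti-chain (no two distinct $p^{(k)}_i$ are comparable), an ascending chain ($p^{(k)}_1<p^{(k)}_2<p^{(k)}_3<p^{(k)}_4<p^{(k)}_5$), a descending chain ($p^{(k)}_1>p^{(k)}_2>p^{(k)}_3>p^{(k)}_4>p^{(k)}_5$), or a strongly connected component ($p^{(k)}_i\le p^{(k)}_j$ for all $i,j\in\{1,\dots,5\}$).
   Context: A quasi-order is a reflexive transitive binary relation; $x<y$ means $x\le y$ and not $y\le x$. A structure is unary FA-presentable if there exist a regular language $L\subseteq a^*$ and a surjection $\phi:L\to X$ such that for equality and for the relation, the set of pairs $(u,v)\in L^2$ whose images are related is regular (i.e. the set of words $\mathrm{conv}(u,v)$ over $\{a,\$\}^2$, reading both words in parallel with the shorter padded by $\$$, is a regular language). A unary FA-foundational binary relation is a finite set $Q$ with a relation $\rho$ and pairwise disjoint five-element subsets (seeds) $P_k=\{p^{(k)}_1,\dots,p^{(k)}_5\}$, $0\le k\le n-1$ ($n\ge0$), such that with $Q'=Q\setminus\bigcup_k P_k$, for all $k,l$ (possibly equal) and $q\in Q'$: (1) the statements $p^{(k)}_i\rho p^{(l)}_i$ ($1\le i\le5$) are all true or all false; (2) the statements $p^{(k)}_i\rho p^{(l)}_{i+1}$ ($1\le i\le4$) are all true or all false; (3) the statements $p^{(k)}_{i+1}\rho p^{(l)}_i$ ($1\le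 i\le 4$) are all true or all false; (4) the statements $p^{(k)}_i\rho p^{(l)}_j$ with $j-i\ge2$ are all true or all false; (5) the statements $p^{(k)}_j\rho p^{(l)}_i$ with $j-i\ge2$ are all true or all false; (6) the statements $q\rho p^{(k)}_i$ ($2\le i\le5$) are all true or all false; (7) the statements $p^{(k)}_i\rho q$ ($2\le i\le 5$) are all true or all false. A unary FA-foundational quasi-order is one in which $\rho$ is a quasi-order on $Q$. Propagation yields $(\hat Q,\hat\rho)$ with $\hat Q=Q'\cup\{p^{(k)}_i:0\le k<n,\ i\in\mathbb{N}\}$ ($\mathbb{N}=\{1,2,\dots\}$, new elements for $i\ge6$) and: $\hat\rho=\rho$ on $Q'$; $p^{(k)}_i\hat\rho p^{(l)}_j$ iff [$j=i$ and $p^{(k)}_1\rho p^{(l)}_1$] or [$j=i+1$ and $p^{(k)}_1\rho p^{(l)}_2$] or [$j=i-1$ and $p^{(k)}_2\rho p^{(l)}_1$] or [$j\ge i+2$ and $p^{(k)}_1\rho p^{(l)}_3$] or [$j\le i-2$ and $p^{(k)}_3\rho p^{(l)}_1$]; for $q\in Q'$: $q\hat\rho p^{(k)}_1$ iff $q\rho p^{(k)}_1$, $q\hat\rho p^{(k)}_i$ ($i\ge2$) iff $q\rho p^{(k)}_2$, $p^{(k)}_1\hat\rho q$ iff $p^{(k)}_1\rho q$, $p^{(k)}_i\hat\rho q$ ($i\ge2$) iff $p^{(k)}_2\rho q$. *)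

From mathcomp Require Import all_boot.
Set Implicit Arguments. Unset Strict Implicit. Unset Printing Implicit Defensive.

Record dfa (S : finType) := Dfa {
  dfa_state : finType;
  dfa_start : dfa_state;
  dfa_delta : dfa_state -> S -> dfa_state;
  dfa_final : pred dfa_state }.

Definition dfa_accepts (S : finType) (A : dfa S) (w : seq S) : bool :=
  @dfa_final S A (foldl (@dfa_delta S A) (@dfa_start S A) w).

Definition regular (S : finType) (Lang : seq S -> Prop) : Prop :=
  exists A : dfa S, forall w, dfa_accepts A w <-> Lang w.

(* Convolution: both words read in parallel, the shorter padded with $ (= None). *)
Definition conv (A B : Type) (u : seq A) (v : seq B) : seq (option A * option B) :=
  mkseq (fun i => (onth u i, onth v i)) (maxn (size u) (size v)).

(* Unary words: the alphabet {a} is [unit] (a = tt);  a^* = seq unit. *)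
Definition uword := seq unit.

Definition rel_lang (X : Type) (L : uword -> Prop) (phi : {w : uword | L w} -> X)
  (R : X -> X -> Prop) : seq (option unit * option unit) -> Prop :=
  fun w => exists (u v : {w : uword | L w}),
      w = conv (sval u) (sval v) /\ R (phi u) (phi v).

Definition unary_FA_presentable (X : Type) (le : X -> X -> Prop) : Prop :=
  exists (L : uword -> Prop) (phi : {w : uword | L w} -> X),
    regular L /\
    (forall x : X, exists u, phi u = x) /\
    regular (rel_lang phi (fun x y => x = y)) /\
    regular (rel_lang phi le).

Definition quasi_order (X : Type) (le : X -> X -> Prop) : Prop :=
  (forall x, le x x) /\ (forall x y z, le x y -> le y z -> le x z).

Definition qo_iso (X Y : Type) (leX : X -> X -> Prop) (leY : Y -> Y -> Prop) : Prop :=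
  exists f : X -> Y, bijective f /\ forall x y, leX x y <-> leY (f x) (f y).

(* ---------- Unary FA-foundational relations ----------
   Seeds are given by p : 'I_n -> 'I_5 -> Q; the paper's element p^{(k)}_i
   (1 <= i <= 5) is  p k (i-1)  (0-based ordinal index). *)
Definition o0 : 'I_5 := @Ordinal 5 0 isT.
Definition o1 : 'I_5 := @Ordinal 5 1 isT.
Definition o2 : 'I_5 := @Ordinal 5 2 isT.

Section Found.
Variables (Q : finType) (rho : rel Q) (n : nat) (p : 'I_n -> 'I_5 -> Q).

Definition nonseed (q : Q) : Prop := forall k i, p k i <> q.

Definition FA_foundational : Prop :=
  (forall k i l j, p k i = p l j -> k = l /\ i = j) /\
  forall k l : 'I_n,
  (forall i j : 'I_5, rho (p k i) (p l i) <-> rho (p k j) (p l j)) /\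
  (forall i i' j j' : 'I_5, val i' = (val i).+1 -> val j' = (val j).+1 ->
      (rho (p k i) (p l i') <-> rho (p k j) (p l j'))) /\
  (forall i i' j j' : 'I_5, val i' = (val i).+1 -> val j' = (val j).+1 ->
      (rho (p k i') (p l i) <-> rho (p k j') (p l j))) /\
  (forall i j i' j' : 'I_5, (val i).+2 <= val j -> (val i').+2 <= val j' ->
      (rho (p k i) (p l j) <-> rho (p k i') (p l j'))) /\
  (forall i j i' j' : 'I_5, (val i).+2 <= val j -> (val i').+2 <= val j' ->
      (rho (p k j) (p l i) <-> rho (p k j') (p l i'))) /\
  (* (6) and (7): paper indices 2..5 = ordinals 1..4 *)
  (forall q : Q, nonseed q ->
     (forall i j : 'I_5, 0 < val i -> 0 < val j ->
        (rho q (p k i) <-> rho q (p k j))) /\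
     (forall i j : 'I_5, 0 < val i -> 0 < val j ->
        (rho (p k i) q <-> rho (p k j) q))).

(* ---------- Propagation ----------
   hat Q = Q' + ('I_n * nat), where (k, m) stands for p^{(k)}_{m+1}. *)
Definition hatQ : Type := ({q : Q | nonseed q} + ('I_n * nat))%type.

Definition hatrho (x y : hatQ) : Prop :=
  match x, y with
  | inl q, inl q' => rho (sval q) (sval q')
  | inl q, inr (k, m) =>
      if m == 0 then rho (sval q) (p k o0) else rho (sval q) (p k o1)
  | inr (k, m), inl q =>
      if m == 0 then rho (p k o0) (sval q) else rho (p k o1) (sval q)
  | inr (k, i), inr (l, j) =>
      (j = i /\ rho (p k o0) (p l o0)) \/
      (j = i.+1 /\ rho (p k o0) (p l o1)) \/
      (j.+1 = i /\ rho (p k o1) (p l o0)) \/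
      (i.+2 <= j /\ rho (p k o0) (p l o2)) \/
      (j.+2 <= i /\ rho (p k o2) (p l o0))
  end.

Definition seed_antichain (k : 'I_n) : Prop :=
  forall i j : 'I_5, i != j -> ~ rho (p k i) (p k j).
Definition seed_ascending (k : 'I_n) : Prop :=
  forall i i' : 'I_5, val i' = (val i).+1 ->
    rho (p k i) (p k i') /\ ~ rho (p k i') (p k i).
Definition seed_descending (k : 'I_n) : Prop :=
  forall i i' : 'I_5, val i' = (val i).+1 ->
    rho (p k i') (p k i) /\ ~ rho (p k i) (p k i').
Definition seed_scc (k : 'I_n) : Prop :=
  forall i j : 'I_5, rho (p k i) (p k j).

Definition seed_ok (k : 'I_n) : Prop :=
  seed_antichain k \/ seed_ascending k \/ seed_descending k \/ seed_scc k.
End Found.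
Arguments hatrho {Q} rho {n} p x y.

From mathcomp Require Import all_boot.
From mathcomp Require Import zify.
From Stdlib Require Import ProofIrrelevance ClassicalEpsilon.
Set Implicit Arguments. Unset Strict Implicit. Unset Printing Implicit Defensive.

(* Forward direction: the automata of a unary presentation are ultimately periodic on unary
   words and on convolutions of two unary words, with a common threshold [thr] and period
   [per].  Represent every element by its shortest word.  Beyond [base] a word is shortest iff
   the word [stride] longer is, where [stride] is a multiple of [per] exceeding [thr]; so the
   long shortest words fall into finitely many residue classes modulo [stride], and each class,
   listed by increasing length, is a seed p_1, p_2, ....  Periodicity along the diagonal makes
   the order between p^(k)_(i+1) and p^(l)_(j+1) depend on j - i only, and since consecutive
   members of a seed are more than [thr] apart, only on j - i clamped to [-2, 2].  Inside one
   seed the same clamping leaves two bits of freedom, whence the four shapes.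
   Backward direction: number the propagation by listing Q' first and then the seeds round
   robin.  Shifting both numbers by n, or only the larger one when the two are far apart,
   changes neither equality nor the propagated order, and any relation on pairs of naturals
   with this ultimately periodic behaviour is recognised by an automaton that keeps min(s,t)
   and |s - t| modulo the period. *)

Definition unary (s : nat) : uword := nseq s tt.

Definition letter := (option unit * option unit)%type.
Notation both := (Some tt, Some tt).
Notation fst_only := (Some tt, @None unit).
Notation snd_only := (@None unit, Some tt).

Lemma uwordE (w : uword) : w = unary (size w).
Proof. by elim: w => [|[] w IH] //=; rewrite /unary /= {1}IH. Qed.

Lemma size_unary s : size (unary s) = s.
Proof. exact: size_nseq. Qed.

Lemma onth_mkseq T (f : nat -> T) n i :
  onth (mkseq f n) i = if i < n then Some (f i) else None.
Proof.
rewrite onthE /mkseq -map_comp -/(mkseq _ n); case: ltnP => H.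
  by rewrite nth_mkseq.
by rewrite nth_default // size_mkseq.
Qed.

Lemma conv_unary s t : conv (unary s) (unary t) =
  nseq (minn s t) both ++ nseq (s - t) fst_only ++ nseq (t - s) snd_only.
Proof.
apply: eq_from_onth => i.
rewrite /conv onth_mkseq !onth_cat !size_nseq /unary !onth_nseq ?size_nseq.
by repeat (case: ifP => ?); try done; lia.
Qed.

Lemma conv_unary_inj s t s' t' :
  conv (unary s) (unary t) = conv (unary s') (unary t') -> s = s' /\ t = t'.
Proof.
have count1 u v : count (fun x => x.1 != None) (conv (unary u) (unary v)) = u.
  by rewrite conv_unary !count_cat !count_nseq /=; lia.
have count2 u v : count (fun x => x.2 != None) (conv (unary u) (unary v)) = v.
  by rewrite conv_unary !count_cat !count_nseq /=; lia.
move=> E; split.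
  by rewrite -(count1 s t) E count1.
by rewrite -(count2 s t) E count2.
Qed.

Lemma foldl_nseq (T S : Type) (f : S -> T -> S) x m c :
  foldl f x (nseq m c) = iter m (f^~ c) x.
Proof. by elim: m x => [|m IH] x //; rewrite iterSr -IH. Qed.

Section EventualPeriodicity.
Variables (S : finType) (f : S -> S).

Lemma iter_pigeonhole x : exists a b, a < b <= #|S| /\ iter a f x = iter b f x.
Proof.
pose g (i : 'I_#|S|.+1) := iter i f x.
have /injectivePn [i [j neq_ij gij]] : ~~ injectiveb g.
  apply/injectiveP => /leq_card; by rewrite card_ord ltnn.
have := ltn_ord i; have := ltn_ord j; rewrite !ltnS.
case: (ltngtP i j) => [lt_ij|lt_ji|/val_inj eq_ij]; last by rewrite eq_ij eqxx in neq_ij.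
- by exists i, j; rewrite lt_ij.
- by exists j, i; rewrite lt_ji.
Qed.

(* The orbit of [x] has preperiod and period at most [#|S|], so [#|S|`!] is a period. *)
Lemma iter_periodic x m P :
  #|S| <= m -> #|S|`! %| P -> iter (m + P) f x = iter m f x.
Proof.
move=> le_Sm dvd_P.
have [a [b [/andP [lt_ab le_bS] fab]]] := iter_pigeonhole x.
have /dvdnP [c ->] : b - a %| P.
  by apply: dvdn_trans dvd_P; apply: dvdn_fact; lia.
have step j : a <= j -> iter (j + (b - a)) f x = iter j f x.
  move=> le_aj; have -> : j + (b - a) = (j - a) + b by lia.
  by rewrite iterD -fab -iterD; congr iter; lia.
elim: c => [|c IH]; first by rewrite mul0n addn0.
by rewrite mulSn addnCA addnC step ?IH //; lia.
Qed.
End EventualPeriodicity.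

Definition accepts1 (A : dfa unit) s := dfa_accepts A (unary s).
Definition accepts2 (A : dfa letter) s t := dfa_accepts A (conv (unary s) (unary t)).

Lemma accepts1E A s :
  accepts1 A s = dfa_final (iter s ((@dfa_delta _ A)^~ tt) (dfa_start A)).
Proof. by rewrite /accepts1 /dfa_accepts foldl_nseq. Qed.

Lemma accepts2E A s t : accepts2 A s t =
  dfa_final (iter (t - s) ((@dfa_delta _ A)^~ snd_only)
    (iter (s - t) ((@dfa_delta _ A)^~ fst_only)
      (iter (minn s t) ((@dfa_delta _ A)^~ both) (dfa_start A)))).
Proof. by rewrite /accepts2 /dfa_accepts conv_unary !foldl_cat !foldl_nseq. Qed.

Section Shift.
Variables (T P : nat).

Lemma accepts1_shift A s : #|dfa_state A| <= T -> #|dfa_state A|`! %| P ->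
  T <= s -> accepts1 A (s + P) = accepts1 A s.
Proof. by move=> le_AT dvd_P le_Ts; rewrite !accepts1E iter_periodic //; lia. Qed.

Lemma accepts2_shift A s t : #|dfa_state A| <= T -> #|dfa_state A|`! %| P ->
  T <= minn s t -> accepts2 A (s + P) (t + P) = accepts2 A s t.
Proof.
move=> le_AT dvd_P le_Tst; rewrite !accepts2E.
have -> : minn (s + P) (t + P) = minn s t + P by lia.
rewrite !subnDr iter_periodic //; lia.
Qed.

Lemma accepts2_shiftr A s t : #|dfa_state A| <= T -> #|dfa_state A|`! %| P ->
  s + T <= t -> accepts2 A s (t + P) = accepts2 A s t.
Proof.
move=> le_AT dvd_P le_st; rewrite !accepts2E.
have -> : minn s (t + P) = minn s t by lia.
have -> : s - (t + P) = s - t by lia.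
have -> : t + P - s = (t - s) + P by lia.
rewrite iter_periodic //; lia.
Qed.

Lemma accepts2_shiftl A s t : #|dfa_state A| <= T -> #|dfa_state A|`! %| P ->
  t + T <= s -> accepts2 A (s + P) t = accepts2 A s t.
Proof.
move=> le_AT dvd_P le_ts; rewrite !accepts2E.
have -> : minn (s + P) t = minn s t by lia.
have -> : t - (s + P) = t - s by lia.
have -> : s + P - t = (s - t) + P by lia.
rewrite [X in iter (t - s) _ X]iter_periodic //; lia.
Qed.
End Shift.

(* The pair of seed positions among p_1, p_2, p_3 to which [hatrho] reduces the
   comparison of p_{i+1} with p_{j+1}. *)
Definition seed_class (i j : nat) : 'I_5 * 'I_5 :=
  if i == j then (o0, o0) else if j == i.+1 then (o0, o1)
  else if i == j.+1 then (o1, o0) else if i < j then (o0, o2) else (o2, o0).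

Lemma seed_class_diag i : seed_class i i = (o0, o0).
Proof. by rewrite /seed_class eqxx. Qed.

Lemma seed_class_succ i : seed_class i i.+1 = (o0, o1).
Proof. by rewrite /seed_class ltn_eqF // eqxx. Qed.

Lemma seed_class_pred i : seed_class i.+1 i = (o1, o0).
Proof. by rewrite /seed_class gtn_eqF // ltn_eqF // eqxx. Qed.

Lemma seed_class_far i j : i.+2 <= j -> seed_class i j = (o0, o2).
Proof. by move=> ?; rewrite /seed_class; repeat (case: ifP => ? //; try (exfalso; lia)). Qed.

Lemma seed_class_far' i j : i.+2 <= j -> seed_class j i = (o2, o0).
Proof. by move=> ?; rewrite /seed_class; repeat (case: ifP => ? //; try (exfalso; lia)). Qed.

Lemma seed_classSS i j : seed_class i.+1 j.+1 = seed_class i j.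
Proof. by rewrite /seed_class !eqSS ltnS. Qed.

Lemma hatrho_seeds (Q : finType) (rho : rel Q) n (p : 'I_n -> 'I_5 -> Q) k i l j :
  hatrho rho p (inr (k, i)) (inr (l, j)) <->
  rho (p k (seed_class i j).1) (p l (seed_class i j).2).
Proof.
rewrite /= /seed_class.
case: eqP => [<-|?]; last case: eqP => [->|?]; last case: eqP => [->|?];
  last case: ifP => ?; rewrite /=;
  (split; [by case=> [[? ?]|[[? ?]|[[? ?]|[[? ?]|[? ?]]]]] => //; lia | move=> ?]).
- by left.
- by right; left.
- by right; right; left.
- by do 3 right; left; split=> //; lia.
- by do 4 right; split=> //; lia.
Qed.

Section Presentation.
Variables (X : Type) (le : X -> X -> Prop).
Hypothesis le_qo : quasi_order le.
Variables (L : uword -> Prop) (phi : {w : uword | L w} -> X).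
Variables (AL : dfa unit) (AE AR : dfa letter).
Hypothesis AL_L : forall w, dfa_accepts AL w <-> L w.
Hypothesis phi_surj : forall x : X, exists u, phi u = x.
Hypothesis AE_eq : forall w, dfa_accepts AE w <-> rel_lang phi (fun x y => x = y) w.
Hypothesis AR_le : forall w, dfa_accepts AR w <-> rel_lang phi le w.

Definition in_dom s := accepts1 AL s.
Definition same s t := accepts2 AE s t.
Definition below s t := accepts2 AR s t.

Lemma in_domP s : in_dom s -> L (unary s).
Proof. exact: (AL_L (unary s)).1. Qed.

Definition word s (hs : in_dom s) : {w | L w} := exist _ (unary s) (in_domP hs).

Lemma word_val s (hs : in_dom s) (u : {w | L w}) : sval u = unary s -> word hs = u.
Proof. by move=> eu; apply: eq_sig_hprop => [w ? ?|]; [exact: proof_irrelevance|rewrite eu]. Qed.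

Lemma accepts2_rel (A : dfa letter) (R : X -> X -> Prop) :
  (forall w, dfa_accepts A w <-> rel_lang phi R w) ->
  forall s t (hs : in_dom s) (ht : in_dom t),
  accepts2 A s t <-> R (phi (word hs)) (phi (word ht)).
Proof.
move=> AR' s t hs ht; rewrite /accepts2 AR'; split => [[u [v [euv Ruv]]]|R_st].
  rewrite (uwordE (sval u)) (uwordE (sval v)) in euv.
  have [es et] := conv_unary_inj euv.
  have -> : word hs = u by apply: word_val; rewrite es -uwordE.
  by have -> : word ht = v by apply: word_val; rewrite et -uwordE.
by exists (word hs), (word ht).
Qed.

Lemma sameP s t (hs : in_dom s) (ht : in_dom t) :
  same s t <-> phi (word hs) = phi (word ht).
Proof. exact: accepts2_rel. Qed.

Lemma belowP s t (hs : in_dom s) (ht : in_dom t) :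
  below s t <-> le (phi (word hs)) (phi (word ht)).
Proof. exact: accepts2_rel. Qed.

Lemma same_refl s : in_dom s -> same s s.
Proof. by move=> hs; apply/(sameP hs hs). Qed.

Lemma same_sym s t : in_dom s -> in_dom t -> same s t -> same t s.
Proof. by move=> hs ht /(sameP hs ht) e; apply/(sameP ht hs). Qed.

Lemma same_trans s t u :
  in_dom s -> in_dom t -> in_dom u -> same s t -> same t u -> same s u.
Proof.
move=> hs ht hu /(sameP hs ht) e1 /(sameP ht hu) e2.
by apply/(sameP hs hu); rewrite e1.
Qed.

Lemma below_refl s : in_dom s -> below s s.
Proof. by move=> hs; apply/(belowP hs hs); apply: le_qo.1. Qed.

Lemma below_trans s t u :
  in_dom s -> in_dom t -> in_dom u -> below s t -> below t u -> below s u.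
Proof.
move=> hs ht hu /(belowP hs ht) le1 /(belowP ht hu) le2.
by apply/(belowP hs hu); apply: le_qo.2 le1 le2.
Qed.

Definition thr := #|dfa_state AL| + #|dfa_state AE| + #|dfa_state AR|.
Definition per := #|dfa_state AL|`! * #|dfa_state AE|`! * #|dfa_state AR|`!.

Lemma per_gt0 : 0 < per.
Proof. by rewrite /per !muln_gt0 !fact_gt0. Qed.

Lemma dvdn_per c : [/\ #|dfa_state AL|`! %| c * per,
  #|dfa_state AE|`! %| c * per & #|dfa_state AR|`! %| c * per].
Proof.
split; apply: dvdn_mull; rewrite /per.
- by rewrite -mulnA dvdn_mulr.
- by rewrite mulnAC dvdn_mull // dvdn_mulr.
- exact: dvdn_mull.
Qed.

Lemma in_dom_shift c s : thr <= s -> in_dom (s + c * per) = in_dom s.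
Proof. by case: (dvdn_per c) => dL _ _; apply: accepts1_shift dL; rewrite /thr; lia. Qed.

Lemma same_shift c s t : thr <= minn s t -> same (s + c * per) (t + c * per) = same s t.
Proof. by case: (dvdn_per c) => _ dE _; apply: accepts2_shift dE; rewrite /thr; lia. Qed.

Lemma same_shiftr c s t : s + thr <= t -> same s (t + c * per) = same s t.
Proof. by case: (dvdn_per c) => _ dE _; apply: accepts2_shiftr dE; rewrite /thr; lia. Qed.

Lemma below_shift c s t : thr <= minn s t -> below (s + c * per) (t + c * per) = below s t.
Proof. by case: (dvdn_per c) => _ _ dR; apply: accepts2_shift dR; rewrite /thr; lia. Qed.

Lemma below_shiftr c s t : s + thr <= t -> below s (t + c * per) = below s t.
Proof. by case: (dvdn_per c) => _ _ dR; apply: accepts2_shiftr dR; rewrite /thr; lia. Qed.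

Lemma below_shiftl c s t : t + thr <= s -> below (s + c * per) t = below s t.
Proof. by case: (dvdn_per c) => _ _ dR; apply: accepts2_shiftl dR; rewrite /thr; lia. Qed.

Definition redundant s := [exists t : 'I_s, in_dom t && same t s].
Definition shortest s := in_dom s && ~~ redundant s.

Lemma shortest_in_dom s : shortest s -> in_dom s.
Proof. by case/andP. Qed.

Lemma shortest_eq s t : shortest s -> shortest t -> same s t -> s = t.
Proof.
move=> /andP [hs rs] /andP [ht rt] est.
case: (ltngtP s t) => // lt.
- by case/negP: rt; apply/existsP; exists (Ordinal lt); rewrite /= hs.
- by case/negP: rs; apply/existsP; exists (Ordinal lt); rewrite /= ht same_sym.
Qed.

(* Beyond [2 thr + per], an earlier equivalent word of [s] and one of [s + per] correspond
   to each other by a shift by [per], or coincide when they are short. *)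
Lemma redundant_shift s : 2 * thr + per <= s -> redundant (s + per) = redundant s.
Proof.
move=> le_s; have per_pos := per_gt0.
have -> : s + per = s + 1 * per by rewrite mul1n.
apply/existsP/existsP => [[t /andP [ht et]] | [t /andP [ht et]]].
- have lt_t := ltn_ord t; case: (leqP (thr + per) t) => le_t.
  + have lt_t' : t - per < s by lia.
    have tE : t - per + 1 * per = t by lia.
    exists (Ordinal lt_t'); apply/andP; split => /=.
      by rewrite -(in_dom_shift 1) ?tE //; lia.
    by rewrite -(same_shift 1) ?tE //; lia.
  + have lt_t' : t < s by lia.
    by exists (Ordinal lt_t'); rewrite /= ht -(same_shiftr 1) //; lia.
- have lt_t := ltn_ord t; case: (leqP thr t) => le_t.
  + have lt_t' : t + 1 * per < s + 1 * per by lia.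
    by exists (Ordinal lt_t'); rewrite /= in_dom_shift ?same_shift //; lia.
  + have lt_t' : t < s + 1 * per by lia.
    by exists (Ordinal lt_t'); rewrite /= ht same_shiftr //; lia.
Qed.

Lemma shortest_shift c s : 2 * thr + per <= s -> shortest (s + c * per) = shortest s.
Proof.
move=> le_s; elim: c => [|c IH]; first by rewrite mul0n addn0.
have -> : s + c.+1 * per = (s + c * per) + 1 * per by rewrite mulSn; lia.
rewrite /shortest in_dom_shift; last lia.
rewrite mul1n redundant_shift; last lia.
exact: IH.
Qed.

Definition base := 2 * thr + per.
Definition stride := thr.+1 * per.

Lemma thr_lt_stride : thr < stride.
Proof. exact: leq_pmulr _ per_gt0. Qed.

Definition residues := [seq r <- iota 0 stride | shortest (base + r)].
Definition nseeds := size residues.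
Definition residue (k : 'I_nseeds) := nth 0 residues k.

Lemma residue_lt k : residue k < stride.
Proof.
by have := mem_nth 0 (ltn_ord k); rewrite mem_filter mem_iota => /andP [_ /andP [_]].
Qed.

Lemma shortest_residue k : shortest (base + residue k).
Proof. by have := mem_nth 0 (ltn_ord k); rewrite mem_filter => /andP []. Qed.

Lemma residue_inj : injective residue.
Proof.
move=> k l ekl; apply/val_inj/eqP.
have uniq_res : uniq residues by apply: filter_uniq; apply: iota_uniq.
by rewrite -(nth_uniq 0 (ltn_ord k) (ltn_ord l) uniq_res); apply/eqP.
Qed.

Lemma residue_surj r : r < stride -> shortest (base + r) -> exists k, residue k = r.
Proof.
move=> lt_r sh_r.
have r_in : r \in residues by rewrite mem_filter sh_r mem_iota.
have lt_idx : index r residues < nseeds by rewrite /nseeds index_mem.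
by exists (Ordinal lt_idx); rewrite /residue nth_index.
Qed.

(* The length of the representative of p^{(k)}_{m+1}. *)
Definition seed_len (k : 'I_nseeds) m := base + residue k + m * stride.

Lemma seed_lenD k m c : seed_len k (m + c) = seed_len k m + c * thr.+1 * per.
Proof. by rewrite /seed_len /stride mulnDl !mulnA addnA. Qed.

Lemma base_le_seed_len k m : base + m * stride <= seed_len k m.
Proof. rewrite /seed_len; lia. Qed.

Lemma shortest_seed_len k m : shortest (seed_len k m).
Proof. by rewrite /seed_len /stride mulnA shortest_shift ?shortest_residue // /base; lia. Qed.

Lemma in_dom_seed_len k m : in_dom (seed_len k m).
Proof. exact/shortest_in_dom/shortest_seed_len. Qed.

Lemma seed_len_inj k l i j : seed_len k i = seed_len l j -> k = l /\ i = j.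
Proof.
rewrite /seed_len => e; have := residue_lt k; have := residue_lt l => lt_l lt_k.
have eij : i = j.
  case: (ltngtP i j) => // lt_ij.
    have : i.+1 * stride <= j * stride by apply: leq_mul.
    rewrite mulSn; lia.
  have : j.+1 * stride <= i * stride by apply: leq_mul.
  rewrite mulSn; lia.
by subst j; split => //; apply: residue_inj; lia.
Qed.

Lemma seed_len_of s : base <= s -> shortest s ->
  exists k, s = seed_len k ((s - base) %/ stride).
Proof.
move=> le_s sh_s; have := thr_lt_stride => lt_stride.
have sE := divn_eq (s - base) stride.
have sh_r : shortest (base + (s - base) %% stride).
  rewrite -(shortest_shift ((s - base) %/ stride * thr.+1)); last by rewrite /base; lia.
  rewrite -mulnA -/stride.
  by have -> : base + (s - base) %% stride + (s - base) %/ stride * stride = s by lia.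
have [k ek] := residue_surj (ltn_pmod _ (leq_ltn_trans (leq0n _) lt_stride)) sh_r.
by exists k; rewrite /seed_len ek; lia.
Qed.

Lemma below_seed_diag k l i d :
  below (seed_len k i) (seed_len l (i + d)) = below (seed_len k 0) (seed_len l d).
Proof.
have -> : seed_len k i = seed_len k 0 + i * thr.+1 * per by rewrite -seed_lenD.
have -> : seed_len l (i + d) = seed_len l d + i * thr.+1 * per by rewrite -seed_lenD addnC.
rewrite below_shift //.
by have := base_le_seed_len k 0; have := base_le_seed_len l d; rewrite /base; lia.
Qed.

Lemma below_seed_diag' k l d j :
  below (seed_len k (j + d)) (seed_len l j) = below (seed_len k d) (seed_len l 0).
Proof.
have -> : seed_len l j = seed_len l 0 + j * thr.+1 * per by rewrite -seed_lenD.
have -> : seed_len k (j + d) = seed_len k d + j * thr.+1 * per by rewrite -seed_lenD addnC.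
rewrite below_shift //.
by have := base_le_seed_len k d; have := base_le_seed_len l 0; rewrite /base; lia.
Qed.

Lemma below_seed_far k l d :
  below (seed_len k 0) (seed_len l d.+2) = below (seed_len k 0) (seed_len l 2).
Proof.
have -> : seed_len l d.+2 = seed_len l 2 + d * thr.+1 * per by rewrite -seed_lenD.
rewrite below_shiftr //.
by have := residue_lt k; have := thr_lt_stride; rewrite /seed_len; lia.
Qed.

Lemma below_seed_far' k l d :
  below (seed_len k d.+2) (seed_len l 0) = below (seed_len k 2) (seed_len l 0).
Proof.
have -> : seed_len k d.+2 = seed_len k 2 + d * thr.+1 * per by rewrite -seed_lenD.
rewrite below_shiftl //.
by have := residue_lt l; have := thr_lt_stride; rewrite /seed_len; lia.
Qed.

Lemma below_seed k l i j : below (seed_len k i) (seed_len l j) =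
  below (seed_len k (seed_class i j).1) (seed_len l (seed_class i j).2).
Proof.
case: (leqP i j) => [/subnKC <-|/ltnW/subnKC <-].
- move: (j - i) => d; rewrite below_seed_diag.
  case: d => [|[|d]]; first by rewrite addn0 seed_class_diag.
    by rewrite addn1 seed_class_succ.
  by rewrite seed_class_far ?below_seed_far //; lia.
- move: (i - j) => d; rewrite below_seed_diag'.
  case: d => [|[|d]]; first by rewrite addn0 seed_class_diag.
    by rewrite addn1 seed_class_pred.
  by rewrite seed_class_far' ?below_seed_far' //; lia.
Qed.

(* Within one seed, p_{i+1} and p_{j+1} already lie [thr] apart when [i != j]. *)
Lemma below_seed_self k i j : i != j -> below (seed_len k i) (seed_len k j) =
  if i < j then below (seed_len k 0) (seed_len k 1) else below (seed_len k 1) (seed_len k 0).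
Proof.
have len2 : seed_len k 2 = seed_len k 1 + 1 * thr.+1 * per by rewrite -seed_lenD.
have apart : seed_len k 0 + thr <= seed_len k 1.
  by have := thr_lt_stride; rewrite /seed_len; lia.
move=> ne_ij; rewrite below_seed.
case: (ltngtP i j) ne_ij => [lt_ij|lt_ji|->]; rewrite ?eqxx // => _.
- have [->|ne] := eqVneq j i.+1; first by rewrite seed_class_succ.
  by rewrite seed_class_far /= ?len2 ?below_shiftr //; lia.
- have [->|ne] := eqVneq i j.+1; first by rewrite seed_class_pred.
  by rewrite seed_class_far' /= ?len2 ?below_shiftl //; lia.
Qed.

Lemma below_nonseed s l m : s < base -> 0 < m ->
  below s (seed_len l m) = below s (seed_len l 1).
Proof.
move=> lt_s lt_m.
have -> : seed_len l m = seed_len l 1 + (m - 1) * thr.+1 * per.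
  by rewrite -seed_lenD; congr seed_len; lia.
by rewrite below_shiftr //; have := base_le_seed_len l 1; have := thr_lt_stride; lia.
Qed.

Lemma below_nonseed' s l m : s < base -> 0 < m ->
  below (seed_len l m) s = below (seed_len l 1) s.
Proof.
move=> lt_s lt_m.
have -> : seed_len l m = seed_len l 1 + (m - 1) * thr.+1 * per.
  by rewrite -seed_lenD; congr seed_len; lia.
by rewrite below_shiftl //; have := base_le_seed_len l 1; have := thr_lt_stride; lia.
Qed.

Lemma shortest_same s : in_dom s -> exists2 t, shortest t & same t s.
Proof.
move=> hs; have ex : exists t, in_dom t && same t s by exists s; rewrite hs same_refl.
case: (ex_minnP ex) => t /andP [ht et] min_t; exists t => //.
rewrite /shortest ht; apply/negP => /existsP [u /andP [hu eu]].
have : t <= u by apply: min_t; rewrite hu (same_trans hu ht hs eu et).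
by have := ltn_ord u; lia.
Qed.

Definition qbound := base + 5 * stride.

Lemma seed_len_lt k (i : 'I_5) : seed_len k i < qbound.
Proof.
have : i * stride <= 4 * stride by apply: leq_mul; rewrite // -ltnS.
by have := residue_lt k; rewrite /seed_len /qbound; lia.
Qed.

(* The finite foundational structure: the shortest words of length below [qbound],
   the seed p^{(k)} consisting of the words [seed_len k 0], ..., [seed_len k 4]. *)
Notation Qrep := {s : 'I_qbound | shortest s}.

Definition qlen (x : Qrep) : nat := sval x.
Definition qrho : rel Qrep := fun x y => below (qlen x) (qlen y).
Definition qseed k i : Qrep := exist _ (Ordinal (seed_len_lt k i)) (shortest_seed_len k i).

Lemma in_dom_qlen x : in_dom (qlen x).
Proof. exact/shortest_in_dom/(valP x). Qed.

Lemma qlen_nonseed q : nonseed qseed q -> qlen q < base.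
Proof.
move=> ns_q; rewrite ltnNge; apply/negP => le_q.
have [k eq] := seed_len_of le_q (valP q).
have lt5 : (qlen q - base) %/ stride < 5.
  rewrite ltn_divLR; last by have := thr_lt_stride; lia.
  have lt_q : qlen q < qbound := ltn_ord (sval q).
  by move: lt_q; rewrite /qbound; lia.
by apply: (ns_q k (Ordinal lt5)); apply/val_inj/val_inj; rewrite /= [RHS]eq.
Qed.

Definition hat_len (x : hatQ qseed) : nat :=
  match x with inl q => qlen (sval q) | inr (k, m) => seed_len k m end.

Lemma shortest_hat_len x : shortest (hat_len x).
Proof. by case: x => [[q ns]|[k m]]; [exact: (valP q) | exact: shortest_seed_len]. Qed.

Lemma hat_len_inj : injective hat_len.
Proof.
have ge k m : base <= seed_len k m by have := base_le_seed_len k m; lia.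
case=> [[q ns_q]|[k m]] [[q' ns_q']|[l m']] /= e.
- by f_equal; apply: eq_sig_hprop => [? h h'|]; [exact: proof_irrelevance | apply/val_inj/val_inj].
- by have := qlen_nonseed ns_q; have := ge l m'; lia.
- by have := qlen_nonseed ns_q'; have := ge k m; lia.
- by have [-> ->] := seed_len_inj e.
Qed.

Lemma hat_len_onto s : shortest s -> exists x, hat_len x = s.
Proof.
move=> sh_s; have [lt_s|le_s] := ltnP s base.
- have lt_sq : s < qbound by rewrite /qbound; lia.
  pose q : Qrep := exist _ (Ordinal lt_sq) sh_s.
  have ns_q : nonseed qseed q.
    by move=> k i /(congr1 qlen); rewrite /qlen /=; have := base_le_seed_len k i; lia.
  by exists (inl (exist _ q ns_q)).
- have [k ->] := seed_len_of le_s sh_s.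
  by exists (inr (k, (s - base) %/ stride)).
Qed.

Definition hat_elt (x : hatQ qseed) : X :=
  phi (word (shortest_in_dom (shortest_hat_len x))).

Lemma hat_elt_le x y : le (hat_elt x) (hat_elt y) <-> below (hat_len x) (hat_len y).
Proof. exact: iff_sym (belowP _ _). Qed.

Lemma hat_elt_inj : injective hat_elt.
Proof.
move=> x y /(sameP (shortest_in_dom _) (shortest_in_dom _)) e.
by apply: hat_len_inj; apply: shortest_eq (shortest_hat_len x) (shortest_hat_len y) e.
Qed.

Lemma hat_elt_surj z : exists x, hat_elt x = z.
Proof.
have [u <-] := phi_surj z.
have hu : in_dom (size (sval u)) by apply/AL_L; rewrite -uwordE; exact: proj2_sig u.
have [s sh_s es] := shortest_same hu.
have [x ex] := hat_len_onto sh_s.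
exists x; have -> : u = word hu by symmetry; apply: word_val; exact: uwordE.
by apply/(sameP (shortest_in_dom (shortest_hat_len x)) hu); rewrite ex.
Qed.

Lemma hatrho_below x y : hatrho qrho qseed x y <-> below (hat_len x) (hat_len y).
Proof.
case: x => [q|[k i]]; case: y => [q'|[l j]].
- by [].
- have lt_q := qlen_nonseed (proj2_sig q).
  by case: j => [|j] //=; rewrite (below_nonseed l lt_q (m := j.+1)).
- have lt_q := qlen_nonseed (proj2_sig q').
  by case: i => [|i] //=; rewrite (below_nonseed' k lt_q (m := i.+1)).
- by rewrite hatrho_seeds below_seed.
Qed.

Lemma qrho_quasi_order : quasi_order (fun x y => qrho x y).
Proof.
split=> [x|x y z]; first exact/below_refl/in_dom_qlen.
exact/below_trans/in_dom_qlen/in_dom_qlen/in_dom_qlen.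
Qed.

Lemma qseed_foundational : FA_foundational qrho qseed.
Proof.
split=> [k i l j /(congr1 qlen) /seed_len_inj [-> /val_inj ->] //|k l].
have seed i j : qrho (qseed k i) (qseed l j) =
    below (seed_len k (seed_class i j).1) (seed_len l (seed_class i j).2).
  exact: below_seed.
split; [|split; [|split; [|split; [|split]]]].
- by move=> i j; rewrite !seed !seed_class_diag.
- move=> i i' j j' hi hj; rewrite !seed.
  have -> : nat_of_ord i' = i.+1 := hi; have -> : nat_of_ord j' = j.+1 := hj.
  by rewrite !seed_class_succ.
- move=> i i' j j' hi hj; rewrite !seed.
  have -> : nat_of_ord i' = i.+1 := hi; have -> : nat_of_ord j' = j.+1 := hj.
  by rewrite !seed_class_pred.
- by move=> i j i' j' ? ?; rewrite !seed !seed_class_far.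
- by move=> i j i' j' ? ?; rewrite !seed !seed_class_far'.
- move=> q /qlen_nonseed lt_q; split=> i j lt_i lt_j; rewrite /qrho.
    by rewrite (below_nonseed k lt_q lt_i) (below_nonseed k lt_q lt_j).
  by rewrite (below_nonseed' k lt_q lt_i) (below_nonseed' k lt_q lt_j).
Qed.

Lemma qseed_ok k : seed_ok qrho qseed k.
Proof.
have self (i j : 'I_5) : i != j -> qrho (qseed k i) (qseed k j) =
    if i < j then below (seed_len k 0) (seed_len k 1)
    else below (seed_len k 1) (seed_len k 0).
  by move=> ne; apply: below_seed_self; rewrite val_eqE.
case a : (below (seed_len k 0) (seed_len k 1));
  case b : (below (seed_len k 1) (seed_len k 0)).
- right; right; right => i j; have [<-|ne] := eqVneq i j.
    exact/below_refl/in_dom_seed_len.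
  by rewrite self // a b if_same.
- right; left => i i' e; have lt : i < i' by rewrite e.
  rewrite !self -?val_eqE ?(ltn_eqF lt) ?(gtn_eqF lt) //.
  by rewrite lt ltnNge (ltnW lt) a b.
- right; right; left => i i' e; have lt : i < i' by rewrite e.
  rewrite !self -?val_eqE ?(ltn_eqF lt) ?(gtn_eqF lt) //.
  by rewrite lt ltnNge (ltnW lt) a b.
- by left => i j ne; rewrite self ?a ?b ?if_same.
Qed.

Lemma le_iso_hat : qo_iso le (hatrho qrho qseed).
Proof.
pose f z := sval (constructive_indefinite_description _ (hat_elt_surj z)).
have fK z : hat_elt (f z) = z by rewrite /f; case: constructive_indefinite_description.
exists f; split.
  by exists hat_elt => [z|x]; [exact: fK | apply: hat_elt_inj; rewrite fK].
by move=> z z'; rewrite hatrho_below -hat_elt_le !fK.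
Qed.

Lemma presentable_foundational :
  exists (Q : finType) (rho : rel Q) (n : nat) (p : 'I_n -> 'I_5 -> Q),
    quasi_order (fun x y => rho x y) /\ FA_foundational rho p /\
    (forall k : 'I_n, seed_ok rho p k) /\ qo_iso le (hatrho rho p).
Proof.
exists _, qrho, nseeds, qseed; split; first exact: qrho_quasi_order.
split; first exact: qseed_foundational.
by split; [exact: qseed_ok | exact: le_iso_hat].
Qed.
End Presentation.

Definition conv_lang (R : nat -> nat -> Prop) (w : seq letter) : Prop :=
  exists s t, w = conv (unary s) (unary t) /\ R s t.

Lemma regular_ext (S : finType) (P1 P2 : seq S -> Prop) :
  (forall w, P1 w <-> P2 w) -> regular P1 -> regular P2.
Proof. by move=> e [A HA]; exists A => w; rewrite HA. Qed.

Lemma rcons_nseq T k (x : T) : rcons (nseq k x) x = nseq k.+1 x.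
Proof. by elim: k => //= k ->. Qed.

Lemma rcons_conv_both a : rcons (conv (unary a) (unary a)) both = conv (unary a.+1) (unary a.+1).
Proof. by rewrite !conv_unary !minnn !subnn /= !cats0 rcons_nseq. Qed.

Lemma rcons_conv_fst s t : t <= s ->
  rcons (conv (unary s) (unary t)) fst_only = conv (unary s.+1) (unary t).
Proof.
move=> le_ts; rewrite !conv_unary.
have -> : minn s.+1 t = minn s t by lia.
have -> : t - s.+1 = t - s by lia.
have -> : s.+1 - t = (s - t).+1 by lia.
have -> : t - s = 0 by lia.
by rewrite /= !cats0 rcons_cat rcons_nseq.
Qed.

Lemma rcons_conv_snd s t : s <= t ->
  rcons (conv (unary s) (unary t)) snd_only = conv (unary s) (unary t.+1).
Proof.
move=> le_st; rewrite !conv_unary.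
have -> : minn s t.+1 = minn s t by lia.
have -> : s - t.+1 = s - t by lia.
have -> : t.+1 - s = (t - s).+1 by lia.
have -> : s - t = 0 by lia.
by rewrite /= rcons_cat rcons_nseq.
Qed.

(* [R] need not be decidable: acceptance is decided classically. *)
Definition holds (P : Prop) : bool := if excluded_middle_informative P then true else false.

Lemma holdsP P : reflect P (holds P).
Proof. by rewrite /holds; case: excluded_middle_informative => h; constructor. Qed.

Lemma holdsE P : holds P <-> P.
Proof. exact: iff_sym (rwP (holdsP P)). Qed.

Section PeriodicPairs.
Variables (K M : nat) (R : nat -> nat -> Prop).
Hypothesis M_gt0 : 0 < M.
Hypothesis R_shift : forall s t, K <= minn s t -> (R (s + M) (t + M) <-> R s t).
Hypothesis R_shiftr : forall s t, s + K <= t -> (R s (t + M) <-> R s t).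
Hypothesis R_shiftl : forall s t, t + K <= s -> (R (s + M) t <-> R s t).

Lemma R_shift_mul c s t : K <= minn s t -> (R (s + c * M) (t + c * M) <-> R s t).
Proof.
move=> le_K; elim: c => [|c IH]; first by rewrite mul0n !addn0.
by rewrite mulSn [M + _]addnC !addnA R_shift //; lia.
Qed.

Lemma R_shiftr_mul c s t : s + K <= t -> (R s (t + c * M) <-> R s t).
Proof.
move=> le_K; elim: c => [|c IH]; first by rewrite mul0n !addn0.
by rewrite mulSn [M + _]addnC addnA R_shiftr //; lia.
Qed.

Lemma R_shiftl_mul c s t : t + K <= s -> (R (s + c * M) t <-> R s t).
Proof.
move=> le_K; elim: c => [|c IH]; first by rewrite mul0n !addn0.
by rewrite mulSn [M + _]addnC addnA R_shiftl //; lia.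
Qed.

(* The representative of [x] modulo the ultimately periodic equivalence with
   threshold [K] and period [M]. *)
Definition wrap x := if x < K then x else K + (x - K) %% M.

Lemma wrap_small x : x < K -> wrap x = x.
Proof. by rewrite /wrap => ->. Qed.

Lemma wrap_lt x : wrap x < K + M.
Proof. by have := ltn_pmod (x - K) M_gt0; rewrite /wrap; case: (ltnP x K); lia. Qed.

Lemma wrap0 : wrap 0 = 0.
Proof. by rewrite /wrap; case: ltnP => //; rewrite mod0n; lia. Qed.

Lemma wrapE x : K <= x -> K <= wrap x /\ x = wrap x + (x - K) %/ M * M.
Proof. by move=> le_x; rewrite /wrap ltnNge le_x /=; have := divn_eq (x - K) M; lia. Qed.

Lemma wrapS x : wrap (wrap x).+1 = wrap x.+1.
Proof.
rewrite /wrap; case: (ltnP x K) => [//|le_x].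
have notlt y : K <= y -> (y < K) = false by move=> ?; apply/negbTE; rewrite -leqNgt.
rewrite !notlt; try lia; congr (K + _).
have -> : (K + (x - K) %% M).+1 - K = (x - K) %% M + 1 by lia.
have -> : x.+1 - K = (x - K) + 1 by lia.
by rewrite modnDml.
Qed.

Lemma R_wrapr s d : R s (s + d) <-> R s (s + wrap d).
Proof.
case: (ltnP d K) => [/wrap_small -> //|/wrapE [le_w dE]].
by rewrite {1}dE addnA R_shiftr_mul //; lia.
Qed.

Lemma R_wrapl s d : R (s + d) s <-> R (s + wrap d) s.
Proof.
case: (ltnP d K) => [/wrap_small -> //|/wrapE [le_w dE]].
by rewrite {1}dE addnA R_shiftl_mul //; lia.
Qed.

Lemma R_wrap_base s d e : R (s + d) (s + e) <-> R (wrap s + d) (wrap s + e).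
Proof.
case: (ltnP s K) => [/wrap_small -> //|/wrapE [le_w sE]].
by rewrite {1 2}sE -!addnA [_ * M + _]addnC [_ * M + e]addnC !addnA R_shift_mul //; lia.
Qed.

Lemma R_wrap s t :
  R s t <-> R (wrap (minn s t) + wrap (s - t)) (wrap (minn s t) + wrap (t - s)).
Proof.
case: (leqP s t) => [le_st|/ltnW le_ts].
- have -> : s - t = 0 by lia.
  rewrite -{1}(subnKC le_st) R_wrapr -[s in R s _]addn0 R_wrap_base.
  by rewrite wrap0 !addn0.
- have -> : t - s = 0 by lia.
  rewrite -{1}(subnKC le_ts) R_wrapl -[t in R _ t]addn0 R_wrap_base.
  by rewrite wrap0 !addn0.
Qed.

Definition wrapO x : 'I_(K + M) := Ordinal (wrap_lt x).
Definition ctr_succ (c : 'I_(K + M)) : 'I_(K + M) := wrapO c.+1.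

Lemma ctr_succ_wrapO x : ctr_succ (wrapO x) = wrapO x.+1.
Proof. by apply: val_inj; rewrite /= wrapS. Qed.

(* The automaton runs through conv(a^s, a^t) keeping [wrap (minn s t)] and [wrap |s - t|];
   the phase [Some None] means that both words are still being read, [Some (Some b)]
   that only the first ([b]) or only the second ([~~ b]) one is, and [None] that the
   input is not a convolution of two unary words. *)
Definition pstate := (option (option bool) * 'I_(K + M) * 'I_(K + M))%type.

Definition pstep (st : pstate) (x : letter) : pstate :=
  let: (ph, c1, c2) := st in
  match ph, x with
  | Some None, (Some _, Some _) => (ph, ctr_succ c1, c2)
  | Some None, (Some _, None) | Some (Some true), (Some _, None) =>
      (Some (Some true), c1, ctr_succ c2)
  | Some None, (None, Some _) | Some (Some false), (None, Some _) =>
      (Some (Some false), c1, ctr_succ c2)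
  | _, _ => (None, c1, c2)
  end.

Definition pfinal (st : pstate) : bool :=
  let: (ph, c1, c2) := st in
  match ph with
  | Some None => holds (R c1 c1)
  | Some (Some true) => holds (R (c1 + c2) c1)
  | Some (Some false) => holds (R c1 (c1 + c2))
  | None => false
  end.

Definition pstart : pstate := (Some None, wrapO 0, wrapO 0).

Definition pair_dfa : dfa letter := Dfa pstart pstep pfinal.

Lemma run_both a : iter a (pstep^~ both) pstart = (Some None, wrapO a, wrapO 0).
Proof. by elim: a => [|a IH] //=; rewrite IH /= ctr_succ_wrapO. Qed.

Lemma run_fst b c : iter b (pstep^~ fst_only) (Some None, c, wrapO 0) =
  if b is 0 then (Some None, c, wrapO 0) else (Some (Some true), c, wrapO b).
Proof. by elim: b => [|b IH] //=; rewrite IH; case: b IH => [|b] _ /=; rewrite ctr_succ_wrapO. Qed.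

Lemma run_snd b c : iter b (pstep^~ snd_only) (Some None, c, wrapO 0) =
  if b is 0 then (Some None, c, wrapO 0) else (Some (Some false), c, wrapO b).
Proof. by elim: b => [|b IH] //=; rewrite IH; case: b IH => [|b] _ /=; rewrite ctr_succ_wrapO. Qed.

Lemma pair_dfa_conv s t : dfa_accepts pair_dfa (conv (unary s) (unary t)) <-> R s t.
Proof.
rewrite R_wrap /dfa_accepts conv_unary !foldl_cat !foldl_nseq /= run_both run_fst.
case: (ltngtP s t) => [lt_st|lt_ts|<-].
- have -> : s - t = 0 by lia.
  have [d ->] : exists d, t - s = d.+1 by exists (t - s).-1; lia.
  by rewrite run_snd /= wrap0 addn0 holdsE.
- have -> : t - s = 0 by lia.
  have [d ->] : exists d, s - t = d.+1 by exists (s - t).-1; lia.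
  by rewrite /= wrap0 addn0 holdsE.
- by rewrite subnn /= wrap0 !addn0 holdsE.
Qed.

Definition conv_phase (w : seq letter) (ph : option (option bool)) : Prop :=
  match ph with
  | Some None => exists a, w = conv (unary a) (unary a)
  | Some (Some true) => exists a b, w = conv (unary (a + b.+1)) (unary a)
  | Some (Some false) => exists a b, w = conv (unary a) (unary (a + b.+1))
  | None => True
  end.

Lemma conv_phase_run w : conv_phase w (foldl pstep pstart w).1.1.
Proof.
elim/last_ind: w => [|w x IH]; first by exists 0.
rewrite foldl_rcons; case: (foldl pstep pstart w) IH => [[ph c1] c2] /=.
case: ph => [[[]|]|] /=; case: x => [[[]|] [[]|]] //=.
- by case=> a [b ->]; exists a, b.+1; rewrite rcons_conv_fst ?addnS //; lia.
- by case=> a [b ->]; exists a, b.+1; rewrite rcons_conv_snd ?addnS //; lia.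
- by case=> a ->; exists a.+1; rewrite rcons_conv_both.
- by case=> a ->; exists a, 0; rewrite rcons_conv_fst // addn1.
- by case=> a ->; exists a, 0; rewrite rcons_conv_snd // addn1.
Qed.

Lemma regular_conv_lang : regular (conv_lang R).
Proof.
exists pair_dfa => w; split=> [acc|[s [t [-> /pair_dfa_conv //]]]].
have [s [t ew]] : exists s t, w = conv (unary s) (unary t).
  move: acc (conv_phase_run w); rewrite /dfa_accepts /=.
  case: (foldl pstep pstart w) => [[[[[]|]|] c1] c2] //= _.
  - by case=> a [b ->]; exists (a + b.+1), a.
  - by case=> a [b ->]; exists a, (a + b.+1).
  - by case=> a ->; exists a, a.
by exists s, t; split => //; apply/pair_dfa_conv; rewrite -ew.
Qed.
End PeriodicPairs.

Section Propagation.
Variables (Q : finType) (rho : rel Q) (n : nat) (p : 'I_n -> 'I_5 -> Q).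

Definition nonseedb : {pred Q} := [pred q | [forall k, forall i, p k i != q]].

Lemma nonseedP q : reflect (nonseed p q) (q \in nonseedb).
Proof.
rewrite inE; apply: (iffP forallP) => [ns k i e|ns k].
  by move/forallP: (ns k) => /(_ i); rewrite e eqxx.
by apply/forallP => i; apply/eqP; exact: ns.
Qed.

Definition ncore := #|nonseedb|.

Definition core_elt (o : 'I_ncore) : hatQ p :=
  inl (exist _ (enum_val o) (elimT (nonseedP _) (enum_valP o))).

(* The numbering of hatQ: the [ncore] elements of Q' come first, then
   [ncore + m * n + k] stands for p^{(k)}_{m+1}. *)
Definition decode (s : nat) : option (hatQ p) :=
  match insub s : option 'I_ncore with
  | Some o => Some (core_elt o)
  | None => omap (fun k : 'I_n => inr (k, (s - ncore) %/ n)) (insub ((s - ncore) %% n))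
  end.

Lemma decode_core s (lt_s : s < ncore) : decode s = Some (core_elt (Ordinal lt_s)).
Proof. by rewrite /decode insubT. Qed.

Lemma decode_noseed s : ncore <= s -> n = 0 -> decode s = None.
Proof.
move=> le_s n0; rewrite /decode insubF; last by rewrite ltnNge le_s.
by rewrite insubF // n0 ltn0.
Qed.

Lemma decode_seed s : ncore <= s -> 0 < n ->
  exists k : 'I_n, val k = (s - ncore) %% n /\ decode s = Some (inr (k, (s - ncore) %/ n)).
Proof.
move=> le_s n_gt0; have lt_k : (s - ncore) %% n < n by rewrite ltn_mod.
exists (Ordinal lt_k); rewrite /decode insubF; last by rewrite ltnNge le_s.
by rewrite insubT.
Qed.

Lemma decode_inr s a : decode s = Some a -> ncore <= s ->
  exists k : 'I_n, val k = (s - ncore) %% n /\ a = inr (k, (s - ncore) %/ n).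
Proof.
move=> es le_s; case: (posnP n) => [n0|n_gt0]; first by rewrite decode_noseed in es.
by have [k [ek es']] := decode_seed le_s n_gt0; rewrite es' in es; case: es => <-; exists k.
Qed.

Lemma isSome_decode s : isSome (decode s) = (s < ncore) || (0 < n).
Proof.
case: (ltnP s ncore) => [lt_s|le_s]; first by rewrite (decode_core lt_s).
case: (posnP n) => [n0|n_gt0]; first by rewrite decode_noseed.
by have [k [_ ->]] := decode_seed le_s n_gt0.
Qed.

Lemma decode_surj a : exists s, decode s = Some a.
Proof.
case: a => [[q ns_q]|[k m]].
- have q_in := introT (nonseedP _) ns_q.
  exists (enum_rank_in q_in q); rewrite (decode_core (ltn_ord _)).
  have -> : Ordinal (ltn_ord (enum_rank_in q_in q)) = enum_rank_in q_in q by apply: val_inj.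
  rewrite /core_elt; do 2 f_equal.
  apply: eq_sig_hprop => [? h h'|]; [exact: proof_irrelevance | exact: enum_rankK_in].
- have n_gt0 : 0 < n by have := ltn_ord k; lia.
  exists (ncore + (m * n + k)).
  have [k' [ek' ->]] := decode_seed (leq_addr (m * n + k) ncore) n_gt0.
  rewrite addKn divnMDl // divn_small ?addn0 // in ek' *.
  by rewrite modnMDl modn_small // in ek'; do 3 f_equal; apply: val_inj.
Qed.

Definition succ_seed (a : hatQ p) : hatQ p :=
  if a is inr (k, m) then inr (k, m.+1) else a.

Lemma succ_seedE k m : succ_seed (inr (k, m)) = inr (k, m.+1).
Proof. by []. Qed.

Definition code_thr := ncore + 2 * n + 2.
Definition code_per := maxn n 1.

Lemma code_per_gt0 : 0 < code_per.
Proof. rewrite /code_per; lia. Qed.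

Lemma decode_shift s : ncore <= s -> decode (s + code_per) = omap succ_seed (decode s).
Proof.
move=> le_s; case: (posnP n) => [n0|n_gt0]; first by rewrite !decode_noseed //; lia.
have -> : code_per = n by rewrite /code_per; lia.
have [k [ek ->]] := decode_seed le_s n_gt0.
have [k' [ek' ->]] := decode_seed (leq_trans le_s (leq_addr n s)) n_gt0.
have sE : s + n - ncore = (s - ncore) + n by lia.
rewrite sE modnDr in ek'; rewrite /= sE divnDr ?dvdnn // divnn n_gt0 addn1.
by do 3 f_equal; apply: val_inj; rewrite ek' ek.
Qed.

Definition far (a b : hatQ p) : Prop :=
  match a, b with
  | inl _, inr (_, j) => 1 <= j
  | inr (_, i), inr (_, j) => i.+2 <= j
  | _, _ => False
  end.

Lemma decode_far s t a b : s + code_thr <= t -> decode s = Some a -> decode t = Some b -> far a b.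
Proof.
move=> le_st es et; have le_t : ncore <= t by rewrite /code_thr in le_st; lia.
have [l [_ ->]] := decode_inr et le_t.
have n_gt0 : 0 < n by case: (posnP n) => // n0; rewrite decode_noseed in et.
case: (ltnP s ncore) => [lt_s|le_s].
- move: es; rewrite (decode_core lt_s) => -[<-] /=.
  have : n %/ n <= (t - ncore) %/ n by apply: leq_div2r; rewrite /code_thr in le_st; lia.
  by rewrite divnn n_gt0.
- have [k [_ ->]] := decode_inr es le_s; rewrite /=.
  have : ((s - ncore) + 2 * n) %/ n <= (t - ncore) %/ n.
    by apply: leq_div2r; rewrite /code_thr in le_st; lia.
  by rewrite divnDMl // addn2.
Qed.

Lemma hatrho_succ2 k i l j :
  hatrho rho p (inr (k, i.+1)) (inr (l, j.+1)) <-> hatrho rho p (inr (k, i)) (inr (l, j)).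
Proof. by rewrite !hatrho_seeds seed_classSS. Qed.

Lemma hatrho_succ_far a b : far a b -> (hatrho rho p a (succ_seed b) <-> hatrho rho p a b).
Proof.
case: a => [q|[k i]]; case: b => [q'|[l j]] // far_ab; first by case: j far_ab.
by rewrite succ_seedE !hatrho_seeds !seed_class_far //; move: far_ab => /=; lia.
Qed.

Lemma hatrho_succ_far' a b : far b a -> (hatrho rho p (succ_seed a) b <-> hatrho rho p a b).
Proof.
case: a => [q|[k i]]; case: b => [q'|[l j]] // far_ba; first by case: i far_ba.
by rewrite succ_seedE !hatrho_seeds !seed_class_far' //; move: far_ba => /=; lia.
Qed.

Definition decoded (R : hatQ p -> hatQ p -> Prop) s t : Prop :=
  if (decode s, decode t) is (Some a, Some b) then R a b else False.

Lemma regular_decoded (R : hatQ p -> hatQ p -> Prop) :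
  (forall k i l j, R (inr (k, i.+1)) (inr (l, j.+1)) <-> R (inr (k, i)) (inr (l, j))) ->
  (forall a b, far a b -> (R a (succ_seed b) <-> R a b)) ->
  (forall a b, far b a -> (R (succ_seed a) b <-> R a b)) ->
  regular (conv_lang (decoded R)).
Proof.
move=> R_succ2 R_succ_far R_succ_far'.
apply: (regular_conv_lang (K := code_thr) code_per_gt0) => s t le_st; rewrite /decoded.
- have le_s : ncore <= s by rewrite /code_thr in le_st; lia.
  have le_t : ncore <= t by rewrite /code_thr in le_st; lia.
  rewrite !decode_shift //.
  case es : (decode s) => [a|] //; case et : (decode t) => [b|] //=.
  have [k [_ ->]] := decode_inr es le_s.
  have [l [_ ->]] := decode_inr et le_t.
  exact: R_succ2.
- rewrite decode_shift; last by rewrite /code_thr in le_st; lia.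
  case es : (decode s) => [a|] //; case et : (decode t) => [b|] //=.
  exact/R_succ_far/(decode_far le_st es et).
- rewrite decode_shift; last by rewrite /code_thr in le_st; lia.
  case es : (decode s) => [a|] //; case et : (decode t) => [b|] //=.
  exact/R_succ_far'/(decode_far le_st et es).
Qed.

Lemma regular_decoded_eq : regular (conv_lang (decoded (fun a b => a = b))).
Proof.
have far_neq a b : far a b -> a <> b /\ a <> succ_seed b.
  by case: a => [q|[k i]]; case: b => [q'|[l j]] //= far_ab; split => // -[] *; lia.
apply: regular_decoded => [k i l j|a b /far_neq [ne ne']|a b /far_neq [ne ne']].
- by split=> [[-> ->]|[-> ->]].
- by split=> // e; case: ne'.
- by split=> e; [case: ne' | case: ne].
Qed.

Lemma regular_decoded_hatrho : regular (conv_lang (decoded (hatrho rho p))).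
Proof.
apply: regular_decoded; [exact: hatrho_succ2 | exact: hatrho_succ_far | exact: hatrho_succ_far'].
Qed.

Definition dom_word (w : uword) : Prop := isSome (decode (size w)).

Definition hat_of (u : {w | dom_word w}) : hatQ p :=
  match decode (size (sval u)) as o return isSome o -> hatQ p with
  | Some a => fun _ => a
  | None => fun h => False_rect _ (Bool.diff_false_true h)
  end (proj2_sig u).

Lemma hat_ofE u a : decode (size (sval u)) = Some a -> hat_of u = a.
Proof. by case: u => w hw /= ew; rewrite /hat_of /=; move: hw; rewrite /dom_word ew. Qed.

Lemma dom_word_unary s a : decode s = Some a -> dom_word (unary s).
Proof. by rewrite /dom_word size_unary => ->. Qed.

Definition dom_step (c : 'I_ncore.+1) (_ : unit) : 'I_ncore.+1 := inord (minn c.+1 ncore).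
Definition dom_dfa : dfa unit := Dfa ord0 dom_step (fun c => (c < ncore) || (0 < n)).

Lemma dom_dfa_run s : val (iter s (dom_step^~ tt) ord0) = minn s ncore.
Proof. by elim: s => [|s IH] /=; [rewrite min0n | rewrite /dom_step inordK IH; lia]. Qed.

Lemma regular_dom_word : regular dom_word.
Proof.
exists dom_dfa => w; rewrite /dfa_accepts /= (uwordE w) foldl_nseq dom_dfa_run.
rewrite /dom_word size_unary isSome_decode.
by have -> : (minn (size w) ncore < ncore) = (size w < ncore) by lia.
Qed.

Lemma conv_lang_decoded (X : Type) (R : X -> X -> Prop) (R' : hatQ p -> hatQ p -> Prop)
    (g : hatQ p -> X) :
  (forall a b, R (g a) (g b) <-> R' a b) ->
  forall w, conv_lang (decoded R') w <-> rel_lang (fun u => g (hat_of u)) R w.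
Proof.
move=> RR' w; split => [[s [t [-> Rst]]]|[u [v [-> Ruv]]]].
- move: Rst; rewrite /decoded.
  case es : (decode s) => [a|] //; case et : (decode t) => [b|] // /RR' Rab.
  exists (exist _ (unary s) (dom_word_unary es)), (exist _ (unary t) (dom_word_unary et)).
  by rewrite (hat_ofE (a := a)) ?(hat_ofE (a := b)) /= ?size_unary.
- have := proj2_sig u; have := proj2_sig v; rewrite /dom_word.
  case eu : (decode (size (sval u))) => [a|] //; case ev : (decode (size (sval v))) => [b|] // _ _.
  exists (size (sval u)), (size (sval v)); split; first by rewrite -!uwordE.
  by rewrite /decoded eu ev; apply/RR'; rewrite -(hat_ofE eu) -(hat_ofE ev).
Qed.

Lemma propagation_presentable (X : Type) (le : X -> X -> Prop) :
  qo_iso le (hatrho rho p) -> unary_FA_presentable le.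
Proof.
case=> f [[g fK gK] le_f].
exists dom_word, (fun u => g (hat_of u)); split; [|split; [|split]].
- exact: regular_dom_word.
- move=> x; have [s es] := decode_surj (f x).
  by exists (exist _ (unary s) (dom_word_unary es)); rewrite (hat_ofE (a := f x)) ?size_unary.
- apply: regular_ext (conv_lang_decoded _) regular_decoded_eq.
  by move=> a b; split => [/(congr1 f)|->]; rewrite ?gK.
- apply: regular_ext (conv_lang_decoded _) regular_decoded_hatrho.
  by move=> a b; rewrite le_f !gK.
Qed.
End Propagation.

Unset Implicit Arguments.

Theorem theorem5p8 (X : Type) (le : X -> X -> Prop) :
  quasi_order le ->
  (unary_FA_presentable le <->
   exists (Q : finType) (rho : rel Q) (n : nat) (p : 'I_n -> 'I_5 -> Q),
     quasi_order (fun x y => rho x y) /\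
     FA_foundational rho p /\
     (forall k : 'I_n, seed_ok rho p k) /\
     qo_iso le (hatrho rho p)).
Proof.
move=> le_qo; split.
- case=> L [phi [[AL AL_L] [phi_surj [[AE AE_eq] [AR AR_le]]]]].
  exact: (presentable_foundational le_qo AL_L phi_surj AE_eq AR_le).
- (* Every propagation is presentable. *)
  by case=> Q [rho [n [p [_ [_ [_ iso]]]]]]; exact: propagation_presentable iso.
Qed.
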